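(* Let $\tau_m=2^m$, let epoch $m$ consist of the rounds $t$ with $\tau_{m-1}<t\le\tau_m$, and write $m(t)$ for the epoch containing $t$. Fix $m_0\ge 1$, $T>\tau_{m_0-1}$ and $\delta\in(0,1)$. Consider a process in which at each round $t$ a context $x_t\sim\mathcal D_{\mathcal X}$ is drawn independently of the past, a reward vector $y_t\in[0,1]^K$ satisfies $\mathbb E[y_t(a)\mid x_t,\mathfrak S_{t-1}]=\mu(x_t,a)$ for all $a$, an action $a_t$ is chosen (arbitrarily for $t\le\tau_{m_0-1}$), and for $t>\tau_{m_0-1}$, $a_t\sim p_{m(t)}(\cdot\mid x_t)$ independently of $y_t$ given $(x_t,\mathfrak S_{t-1})$, where $(\widehat\mu_m,\gamma_m)$ is measurable with respect to the history $\mathfrak S_{\tau_{m-1}}$ before epoch $m$. Suppose that with probability at least $1-\delta/2$, for every epoch $m\ge m_0$ with $\tau_{m-1}<T$ and every $\pi\in\Psi$, $\mathrm{Reg}(\pi)\le 2\widehat{\mathrm{Reg}}_m(\pi)+204K/\gamma_m$. Then with probability at least $1-\delta$, $$\sum_{t=1}^{T}\big(y_t(\pi_\mu(x_t))-y_t(a_t)\big)\le \tau_{m_0-1}+206K\sum_{t=\tau_{m_0-1}+1}^{T}\frac{1}{\gamma_{m(t)}}+\sqrt{8(T-\tau_{m_0-1})\log(2/\delta)}.$$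
   Context: Let $\mathcal X$ be a finite set with distribution $\mathcal D_{\mathcal X}$, $\mathcal A=[K]$ the action set, $\mu:\mathcal X\times\mathcal A\to\mathbb R$ the true mean reward function; $\mathfrak S_{t}$ is the sigma-algebra generated by the history up to round $t$. For each epoch $m$, $\widehat\mu_m:\mathcal X\times\mathcal A\to\mathbb R$ is an estimated reward function and $\gamma_m>0$ a spread parameter; $b_m(x)\in\arg\max_i\widehat\mu_m(x,i)$ (fixed tie-breaking), and the kernel is $p_m(i\mid x)=1/\big(K+\gamma_m(\widehat\mu_m(x,b_m(x))-\widehat\mu_m(x,i))\big)$ for $i\ne b_m(x)$, $p_m(b_m(x)\mid x)=1-\sum_{i\ne b_m(x)}p_m(i\mid x)$. $\Psi=\mathcal A^{\mathcal X}$ is the set of deterministic policies. Let $\pi_\mu(x)\in\arg\max_a\mu(x,a)$ and $\pi_{\widehat\mu_m}(x)=b_m(x)$. $R(\pi)=\mathbb E_{x\sim\mathcal D_{\mathcal X}}[\mu(x,\pi(x))]$, $\widehat R_m(\pi)=\mathbb E_{x\sim\mathcal D_{\mathcal X}}[\widehat\mu_m(x,\pi(x))]$, $\mathrm{Reg}(\pi)=R(\pi_\mu)-R(\pi)$, $\widehat{\mathrm{Reg}}_m(\pi)=\widehat R_m(\pi_{\widehat\mu_m})-\widehat R_m(\pi)$. *)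

From HB Require Import structures.
From mathcomp Require Import all_boot all_order all_algebra.
From mathcomp Require Import all_classical all_reals all_analysis.
Set Implicit Arguments. Unset Strict Implicit. Unset Printing Implicit Defensive.
Import Order.TTheory GRing.Theory Num.Theory.
Local Open Scope classical_set_scope.
Local Open Scope ring_scope.

Definition tau (m : nat) : nat := 2 ^ m.
(* m(t): the epoch containing round t >= 1, i.e. the least m with t <= 2^m *)
Definition epoch (t : nat) : nat := up_log 2 t.

Section Defs.
Variable R : realType.
Variable X : finType.
Variable n : nat.
Local Notation A := 'I_n.+1.
Local Notation K := (n.+1%:R : R).

(* b_m(x) : greedy action with fixed tie-breaking *)
Definition bgreedy (muh : X -> A -> R) (x : X) : A :=
  [arg max_(i > ord0) muh x i]%O.

Definition pker (muh : X -> A -> R) (gam : R) (x : X) (i : A) : R :=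
  let b := bgreedy muh x in
  if i != b then (K + gam * (muh x b - muh x i))^-1
  else 1 - \sum_(j : A | j != b) (K + gam * (muh x b - muh x j))^-1.

Definition Rval (D : X -> R) (f : X -> A -> R) (pi : X -> A) : R :=
  \sum_(x : X) D x * f x (pi x).
Definition Reg (D : X -> R) (mu : X -> A -> R) (pimu : X -> A) (pi : X -> A) : R :=
  Rval D mu pimu - Rval D mu pi.
Definition Reghat (D : X -> R) (muh : X -> A -> R) (pi : X -> A) : R :=
  Rval D muh (bgreedy muh) - Rval D muh pi.

Variables (d : measure_display) (Omega : measurableType d).

Definition hist_gen (x : nat -> Omega -> X) (y : nat -> Omega -> A -> R)
  (a : nat -> Omega -> A) (t : nat) : set (set Omega) :=
  [set S | exists s, (1 <= s <= t)%N /\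
     ((exists c, S = [set w | x s w = c]) \/
      (exists i, S = [set w | a s w = i]) \/
      (exists i (B : set R), measurable B /\ S = [set w | B (y s w i)]))].

Definition hist x y a t : set (set Omega) := <<s hist_gen x y a t >>.

End Defs.

(* After the [tau (m0 - 1)] warm-up rounds (each costing at most 1), the realized
   regret of round [t] is its conditional mean given the past plus a martingale
   difference [mdiff t] bounded by 2.  The conditional mean is [R(pi_mu)] minus the
   expected reward of the kernel [p_m(t)]; on the event of the hypothesis, applying the
   estimation guarantee to the policy maximising the excess regret
   [mu-gap - 2 * estimated gap] bounds it by [206 K / gamma_m].  The sum of the
   martingale differences exceeds [sqrt (8 N log (2 / delta))] with probability at most
   [delta / 2] by the Azuma-Hoeffding argument, using [exp z <= 1 + z + 2 z^2] on
   [[-1, 1]].  Conditional means are computed without a theory of conditional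
   expectation: [E[G h]] for a bounded past-measurable [G] only depends on the
   integrals of [h] over the level sets of [G], approximating [G] by staircases. *)

From HB Require Import structures.
From mathcomp Require Import all_boot all_order all_algebra.
From mathcomp Require Import all_classical all_reals all_analysis.
From mathcomp Require Import measurable_realfun ring lra.
Import Order.TTheory GRing.Theory Num.Theory.
Local Open Scope classical_set_scope.
Local Open Scope ring_scope.

Set Implicit Arguments. Unset Strict Implicit. Unset Printing Implicit Defensive.

Section bounded_expectation.
Context {R : realType} {d : measure_display} {Omega : measurableType d}.
Variable P : probability Omega R.

Definition bounded_rv (f : Omega -> R) :=
  measurable_fun setT f /\ exists M : R, forall w, `|f w| <= M.

Definition expectR (f : Omega -> R) : R := \int[P]_w f w.

Lemma bounded_rv_integrable f : bounded_rv f -> P.-integrable setT (EFin \o f).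
Proof.
move=> [mf [M hM]]; apply: measurable_bounded_integrable => //.
  by apply: (le_lt_trans (probability_le1 P measurableT)); rewrite ltry.
exists M; split; first by rewrite num_real.
by move=> r Mr w _; apply: le_trans (hM w) _; exact: ltW.
Qed.

Lemma bounded_rv_cst c : bounded_rv (fun=> c).
Proof. by split; [exact: measurable_cst | exists `|c|]. Qed.

Lemma bounded_rvD f g : bounded_rv f -> bounded_rv g ->
  bounded_rv (fun w => f w + g w).
Proof.
move=> [mf [M hM]] [mg [N hN]]; split; first exact: measurable_funD.
by exists (M + N) => w; apply: le_trans (ler_normD _ _) _; exact: lerD.
Qed.

Lemma bounded_rvN f : bounded_rv f -> bounded_rv (fun w => - f w).
Proof.
move=> [mf [M hM]]; split; first exact: measurable_funN.
by exists M => w; rewrite normrN.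
Qed.

Lemma bounded_rvB f g : bounded_rv f -> bounded_rv g ->
  bounded_rv (fun w => f w - g w).
Proof. by move=> hf hg; apply: bounded_rvD => //; exact: bounded_rvN. Qed.

Lemma bounded_rvM f g : bounded_rv f -> bounded_rv g ->
  bounded_rv (fun w => f w * g w).
Proof.
move=> [mf [M hM]] [mg [N hN]]; split; first exact: measurable_funM.
by exists (M * N) => w; rewrite normrM; apply: ler_pM.
Qed.

Lemma bounded_rvX2 f : bounded_rv f -> bounded_rv (fun w => f w ^+ 2).
Proof.
by move=> hf; under [X in bounded_rv X]funext do rewrite expr2; exact: bounded_rvM.
Qed.

Lemma bounded_rv_sum I (s : seq I) (F : I -> Omega -> R) :
  (forall i, bounded_rv (F i)) -> bounded_rv (fun w => \sum_(i <- s) F i w).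
Proof.
move=> hF; elim: s => [|i s IH].
  by under [X in bounded_rv X]funext do rewrite big_nil; exact: bounded_rv_cst.
by under [X in bounded_rv X]funext do rewrite big_cons; exact: bounded_rvD.
Qed.

Lemma bounded_rv_indic (A : set Omega) : measurable A -> bounded_rv (\1_A).
Proof.
move=> mA; split; first exact: measurable_indic.
by exists 1 => w; rewrite /indic; case: (w \in A); rewrite ?normr1 ?normr0.
Qed.

Lemma bounded_rv_expR f : bounded_rv f -> bounded_rv (fun w => expR (f w)).
Proof.
move=> [mf [M hM]]; split; first exact: (measurableT_comp (@measurable_expR R)).
exists (expR M) => w; rewrite ger0_norm ?expR_ge0 // ler_expR.
exact: le_trans (ler_norm _) (hM w).
Qed.

Lemma expectRD f g : bounded_rv f -> bounded_rv g ->
  expectR (fun w => f w + g w) = expectR f + expectR g.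
Proof. by move=> hf hg; rewrite /expectR RintegralD //; exact: bounded_rv_integrable. Qed.

Lemma expectRB f g : bounded_rv f -> bounded_rv g ->
  expectR (fun w => f w - g w) = expectR f - expectR g.
Proof. by move=> hf hg; rewrite /expectR RintegralB //; exact: bounded_rv_integrable. Qed.

Lemma expectRZl c f : bounded_rv f -> expectR (fun w => c * f w) = c * expectR f.
Proof. by move=> hf; rewrite /expectR RintegralZl //; exact: bounded_rv_integrable. Qed.

Lemma eq_expectR f g : f =1 g -> expectR f = expectR g.
Proof. by move=> fg; congr expectR; apply: funext. Qed.

Lemma ler_expectR f g : bounded_rv f -> bounded_rv g ->
  (forall w, f w <= g w) -> expectR f <= expectR g.
Proof.
by move=> hf hg fg; apply: le_Rintegral => //; exact: bounded_rv_integrable.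
Qed.

Lemma expectR_cst c : expectR (fun=> c) = c.
Proof.
rewrite /expectR Rintegral_cst // (_ : fine _ = 1) ?mulr1 //.
exact: (congr1 fine (probability_setT P)).
Qed.

Lemma expectR_sum I (s : seq I) (F : I -> Omega -> R) :
  (forall i, bounded_rv (F i)) ->
  expectR (fun w => \sum_(i <- s) F i w) = \sum_(i <- s) expectR (F i).
Proof.
move=> hF; elim: s => [|i s IH].
  by rewrite big_nil (@eq_expectR _ (fun=> 0)) ?expectR_cst // => w; rewrite big_nil.
rewrite big_cons -IH -expectRD //; last exact: bounded_rv_sum.
by apply: eq_expectR => w; rewrite big_cons.
Qed.

Lemma expectR_indic (A : set Omega) : measurable A -> expectR (\1_A) = fine (P A).
Proof. by move=> mA; rewrite /expectR /Rintegral integral_indic // setIT. Qed.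

Lemma expectR_indicM (S : set Omega) f : measurable S ->
  expectR (fun w => \1_S w * f w) = fine (\int[P]_(w in S) (f w)%:E).
Proof.
move=> mS; rewrite -[RHS]/(Rintegral P S f) Rintegral_mkcond /expectR.
apply: eq_Rintegral => w _; rewrite /patch indicE.
by case: (w \in S); rewrite ?mul1r ?mul0r.
Qed.

Lemma expectR_dist_le f g c : bounded_rv f -> bounded_rv g ->
  (forall w, `|f w - g w| <= c) -> `|expectR f - expectR g| <= c.
Proof.
move=> hf hg fg; rewrite -expectRB // ler_norml; apply/andP; split.
- rewrite -(expectR_cst (- c)); apply: ler_expectR.
  + exact: bounded_rv_cst.
  + exact: bounded_rvB.
  + by move=> w; have := fg w; rewrite ler_norml => /andP[].
- rewrite -(expectR_cst c); apply: ler_expectR.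
  + exact: bounded_rvB.
  + exact: bounded_rv_cst.
  + by move=> w; have := fg w; rewrite ler_norml => /andP[].
Qed.

End bounded_expectation.

Lemma eq0_norm_le_mul_eps (R : realFieldType) (x C : R) :
  (forall e, 0 < e -> `|x| <= C * e) -> x = 0.
Proof.
move=> hx; apply/normr0_eq0/eqP; rewrite eq_le normr_ge0 andbT.
apply/ler_addgt0Pr => e e0; rewrite add0r.
have C1 : 0 < `|C| + 1 by rewrite ltr_pwDr // normr_ge0.
apply: le_trans (hx _ (divr_gt0 e0 C1)) _.
rewrite mulrA ler_pdivrMr // mulrC ler_wpM2l ?(ltW e0) //.
by apply: le_trans (ler_norm C) _; rewrite lerDl.
Qed.

Section staircase.
Context {R : realType} {T : Type}.

Definition stair_cell (e L : R) (j : nat) : set R :=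
  `[j%:R * e - L, j.+1%:R * e - L[%classic.

(* A lower approximation of [u] on the grid [-L + e Z], valid where [|u| <= L]. *)
Definition staircase (e L : R) (u : T -> R) (w : T) : R :=
  \sum_(j < (Num.truncn (2 * L / e)).+1) (j%:R * e - L) * \1_(u @^-1` stair_cell e L j) w.

Lemma staircase_approx (e L : R) (u : T -> R) w : 0 < e -> `|u w| <= L ->
  0 <= u w - staircase e L u w <= e.
Proof.
move=> e0 uL; have [uLl uLr] : - L <= u w /\ u w <= L.
  by move: uL; rewrite ler_norml => /andP[].
have uLe : 0 <= (u w + L) / e by rewrite divr_ge0 ?(ltW e0) // -lerBlDr sub0r.
set j0 := Num.truncn ((u w + L) / e).
have /andP[lej0 ltj0] := truncn_itv uLe; rewrite -/j0 in lej0 ltj0.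
have in_cell j : (w \in u @^-1` stair_cell e L j) = (j == j0).
  apply/idP/eqP => [|->]; rewrite inE /= /stair_cell /= in_itv /= lerBlDr ltrBrDr.
    by rewrite -ler_pdivlMr // -ltr_pdivrMr // => /truncn_def <-.
  by rewrite -ler_pdivlMr // -ltr_pdivrMr // lej0.
have j0k : (j0 < (Num.truncn (2 * L / e)).+1)%N.
  by rewrite ltnS; apply: le_truncn; rewrite ler_pM2r ?invr_gt0 //; lra.
have -> : staircase e L u w = j0%:R * e - L.
  rewrite /staircase (bigD1 (Ordinal j0k)) //= big1 => [|j hj].
    by rewrite indicE in_cell eqxx mulr1 addr0.
  by rewrite indicE in_cell (_ : (j == j0 :> nat) = false) ?mulr0 //; apply/negbTE.
move: lej0 ltj0; rewrite ler_pdivlMr // ltr_pdivrMr // -natr1; lra.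
Qed.

End staircase.

(* Approximate [u] uniformly by staircases, i.e. combinations of indicators of
   [u]-measurable events. *)
Lemma expectRM_eq_from_preimages (R : realType) d (Omega : measurableType d)
    (P : probability Omega R) (u h1 h2 : Omega -> R) :
  bounded_rv u -> bounded_rv h1 -> bounded_rv h2 ->
  (forall B : set R, measurable B ->
     expectR P (fun w => \1_(u @^-1` B) w * h1 w) =
     expectR P (fun w => \1_(u @^-1` B) w * h2 w)) ->
  expectR P (fun w => u w * h1 w) = expectR P (fun w => u w * h2 w).
Proof.
move=> hu hh1 hh2 hB; have [mu [L uL]] := hu.
have [_ [M1 hM1]] := hh1; have [_ [M2 hM2]] := hh2.
apply/eqP; rewrite -subr_eq0; apply/eqP/(@eq0_norm_le_mul_eps _ _ (M1 + M2)) => e e0.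
pose s := staircase e L u.
have mcell j : measurable (u @^-1` stair_cell e L j).
  by rewrite -[_ @^-1` _]setTI; apply: mu => //; exact: measurable_itv.
have bs : bounded_rv s.
  apply: bounded_rv_sum => j; apply: bounded_rvM; first exact: bounded_rv_cst.
  exact: bounded_rv_indic.
have expect_sM h : bounded_rv h -> expectR P (fun w => s w * h w) =
    \sum_(j < (Num.truncn (2 * L / e)).+1)
      (j%:R * e - L) * expectR P (fun w => \1_(u @^-1` stair_cell e L j) w * h w).
  move=> bh; rewrite (@eq_expectR _ _ _ P _ (fun w => \sum_(j < (Num.truncn (2 * L / e)).+1)
      (j%:R * e - L) * (\1_(u @^-1` stair_cell e L j) w * h w))); last first.
    by move=> w; rewrite /s /staircase mulr_suml; apply: eq_bigr => j _; rewrite mulrA.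
  rewrite expectR_sum => [|j]; first by apply: eq_bigr => j _; rewrite expectRZl //;
    apply: bounded_rvM => //; exact: bounded_rv_indic.
  apply: bounded_rvM; first exact: bounded_rv_cst.
  by apply: bounded_rvM => //; exact: bounded_rv_indic.
have close h (M : R) : bounded_rv h -> (forall w, `|h w| <= M) ->
    `|expectR P (fun w => u w * h w) - expectR P (fun w => s w * h w)| <= M * e.
  move=> bh hM; apply: expectR_dist_le; [exact: bounded_rvM | exact: bounded_rvM |] => w.
  rewrite -mulrBl normrM mulrC; apply: ler_pM => //.
  by have /andP[s1 s2] := staircase_approx e0 (uL w); rewrite ger0_norm.
have shE : expectR P (fun w => s w * h1 w) = expectR P (fun w => s w * h2 w).
  rewrite (expect_sM _ hh1) (expect_sM _ hh2).
  by apply: eq_bigr => j _; rewrite hB //; exact: measurable_itv.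
rewrite mulrDl; apply: le_trans (lerD (close _ _ hh1 hM1) (close _ _ hh2 hM2)).
rewrite (distrC (expectR P (fun w => u w * h2 w))) -shE.
by apply: le_trans (ler_normD _ _); rewrite addrA subrK.
Qed.

Lemma case_indic_sum (R : realType) (T : Type) (I : finType) (g : T -> I)
    (F : I -> T -> R) w :
  F (g w) w = \sum_i \1_[set w | g w = i] w * F i w.
Proof.
rewrite (bigD1 (g w)) //= big1 ?addr0 => [|i hi]; first by rewrite indicE mem_set ?mul1r.
by rewrite indicE memNset ?mul0r //= => gi; rewrite gi eqxx in hi.
Qed.

Section measurable_helpers.
Context {d : measure_display} {T : measurableType d} {R : realType}.

Lemma measurable_funV (f : T -> R) :
  measurable_fun setT f -> measurable_fun setT (fun w => (f w)^-1).
Proof.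
move=> mf; apply: measurableT_comp mf.
rewrite -(setUv [set 0 : R]); apply/measurable_funU => //; first exact: measurableC.
split; first exact: measurable_fun_set1.
apply: open_continuous_measurable_fun => [|x /set_mem /= x0].
  by apply/closed_openC/accessible_closed_set1/hausdorff_accessible; exact: Rhausdorff.
by apply: inv_continuous; apply/eqP.
Qed.

Lemma measurable_ler_set (f g : T -> R) :
  measurable_fun setT f -> measurable_fun setT g -> measurable [set w | f w <= g w].
Proof.
move=> mf mg; have mtrue : measurable [set true] by [].
have := measurable_fun_ler mf mg measurableT mtrue.
by rewrite setTI; congr measurable; apply/seteqP; split.
Qed.

Lemma measurable_fun_case (I : finType) (g : T -> I) (F : I -> T -> R) :
  (forall i, measurable [set w | g w = i]) -> (forall i, measurable_fun setT (F i)) ->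
  measurable_fun setT (fun w => F (g w) w).
Proof.
move=> mg mF; under eq_fun do rewrite case_indic_sum.
apply: measurable_sum => i; apply: measurable_funM => //; exact: measurable_indic.
Qed.

Lemma measurable_pick (I : finType) (i0 : I) (q : T -> I -> bool) :
  (forall i, measurable [set w | q w i]) ->
  forall j, measurable [set w | odflt i0 [pick i | q w i] = j].
Proof.
move=> mq j.
have mq' i v : measurable [set w | q w i = v].
  case: v; first by congr measurable: (mq i); apply/seteqP; split.
  rewrite (_ : [set w | q w i = false] = ~` [set w | q w i]); first exact: measurableC.
  by apply/seteqP; split=> w /=; case: (q w i).
rewrite (_ : [set w | odflt i0 [pick i | q w i] = j] =
  \bigcup_(f in [set f : {ffun I -> bool} | odflt i0 [pick i | f i] = j])
    \bigcap_(i in [set: I]) [set w | q w i = f i]).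
  apply: fin_bigcup_measurable; first exact: finite_finset.
  move=> f _; apply: fin_bigcap_measurable; first exact: finite_finset.
  by move=> i _; exact: mq'.
apply/seteqP; split => w /=.
- move=> <-; exists [ffun i => q w i]; last by move=> i _; rewrite /= ffunE.
  by rewrite /=; congr odflt; apply: eq_pick => i; rewrite ffunE.
- by case=> f /= <- hw; congr odflt; apply: eq_pick => i; exact: hw.
Qed.

Lemma measurable_sum_in (I : eqType) (s : seq I) (h : I -> T -> R) :
  (forall i, i \in s -> measurable_fun setT (h i)) ->
  measurable_fun setT (fun w => \sum_(i <- s) h i w).
Proof.
move=> mh; rewrite (_ : (fun w => _) =
    (fun w => \sum_(i <- s) (if i \in s then h i w else 0))); last first.
  by apply: funext => w; rewrite -big_mkcond -big_seq.
apply: measurable_sum => i; case: (boolP (i \in s)) => [/mh // | _]; exact: measurable_cst.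
Qed.

End measurable_helpers.

Section greedy_kernel.
Context {R : realType} {X : finType} {n : nat}.
Local Notation A := 'I_n.+1.
Local Notation K := (n.+1%:R : R).

Lemma bgreedy_max (muh : X -> A -> R) c j : muh c j <= muh c (bgreedy muh c).
Proof. by rewrite /bgreedy; case: arg_maxP => //= i _; apply. Qed.

Section measurability.
Context {d : measure_display} {T : measurableType d}.
Variables (mh : T -> X -> A -> R) (c : X).
Hypothesis mmh : forall j, measurable_fun setT (fun w => mh w c j).

Lemma measurable_bgreedy b : measurable [set w | bgreedy (mh w) c = b].
Proof.
rewrite (_ : [set w | _] =
   [set w | odflt ord0 [pick i | [forall j, mh w c j <= mh w c i]] = b]); last first.
  by apply/seteqP; split => w; rewrite /= /bgreedy /Order.arg_max /extremum;
    congr (odflt _ _ = _); apply: eq_pick.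
apply: measurable_pick => i.
rewrite (_ : [set w | _] = \bigcap_(j in [set: A]) [set w | mh w c j <= mh w c i]).
  apply: fin_bigcap_measurable; first exact: finite_finset.
  by move=> j _; exact: measurable_ler_set.
by apply/seteqP; split => w /= => [/forallP H j _ | H]; [exact: H | apply/forallP => j; exact: H].
Qed.

Lemma measurable_greedy_value : measurable_fun setT (fun w => mh w c (bgreedy (mh w) c)).
Proof.
exact: (measurable_fun_case (F := fun b w => mh w c b) measurable_bgreedy).
Qed.

Lemma measurable_pker (g : T -> R) i : measurable_fun setT g ->
  measurable_fun setT (fun w => pker (mh w) (g w) c i).
Proof.
move=> mg; apply: (measurable_fun_case (F := fun b w =>
  if i != b then (K + g w * (mh w c b - mh w c i))^-1
  else 1 - \sum_(j : A | j != b) (K + g w * (mh w c b - mh w c j))^-1))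
  measurable_bgreedy _ => b.
have mden j : measurable_fun setT (fun w => (K + g w * (mh w c b - mh w c j))^-1).
  apply: measurable_funV; apply: measurable_funD => //.
  by apply: measurable_funM => //; exact: measurable_funB.
case: (i != b) => //; apply: measurable_funB => //.
under eq_fun do rewrite big_mkcond /=.
by apply: measurable_sum => j; case: (j != b).
Qed.

End measurability.

Section kernel.
Variables (muh : X -> A -> R) (gam : R) (c : X).
Hypothesis gam0 : 0 < gam.
Let b := bgreedy muh c.
Let q j := (K + gam * (muh c b - muh c j))^-1.

Let den_ge j : K <= K + gam * (muh c b - muh c j).
Proof. by rewrite lerDl mulr_ge0 ?(ltW gam0) // subr_ge0 bgreedy_max. Qed.

Let K_gt0 : 0 < K. Proof. by rewrite ltr0n. Qed.

Let den_gt0 j : 0 < K + gam * (muh c b - muh c j).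
Proof. exact: lt_le_trans K_gt0 (den_ge j). Qed.

Let sum_q : \sum_(j : A | j != b) q j <= 1 - K^-1.
Proof.
have q_le j : q j <= K^-1 by rewrite lef_pV2 ?posrE.
apply: le_trans (ler_sum _ (fun j _ => q_le j)) _.
rewrite sumr_const cardC1 card_ord (_ : n.+1.-1 = n) // -[_ *+ n]mulr_natl lerBrDr.
by rewrite -[X in _ + X]mul1r -mulrDl natr1 divff // lt0r_neq0.
Qed.

Lemma pker_ge0 i : 0 <= pker muh gam c i.
Proof.
rewrite /pker -/b; case: (i != b); first by rewrite invr_ge0 ltW.
rewrite subr_ge0; apply: le_trans sum_q _.
by rewrite lerBlDr lerDl invr_ge0 ltW.
Qed.

Lemma pker_sum : \sum_(i : A) pker muh gam c i = 1.
Proof.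
rewrite (bigD1 b) //= /pker -/b eqxx /= [X in _ + X](eq_bigr q) ?subrK //.
by move=> j ->.
Qed.

Lemma pker_le1 i : pker muh gam c i <= 1.
Proof.
rewrite -pker_sum (bigD1 i) //= lerDl; apply: sumr_ge0 => j _; exact: pker_ge0.
Qed.

Lemma pker_mul_gap_le i : pker muh gam c i * (muh c b - muh c i) <= gam^-1.
Proof.
case: (eqVneq i b) => [->|hi]; first by rewrite subrr mulr0 invr_ge0 ltW.
rewrite /pker -/b hi mulrC ler_pdivrMr // ler_pdivlMl // lerDr ltW //.
Qed.

End kernel.
End greedy_kernel.

Lemma expR_le_quadratic (R : realType) (z : R) : -1 <= z <= 1 ->
  expR z <= 1 + z + 2 * z ^+ 2.
Proof.
move=> /andP[z1 z2]; case: (lerP z 0) => hz.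
  have := expR_ge1Dx (- z); have := expRxMexpNx_1 z; have := expR_gt0 z; nra.
(* For [z > 0] bound [expR (z/2)] through [1 - z/2 <= expR (- z/2)] and square. *)
have e2 : expR z = expR (z / 2) ^+ 2 by rewrite -expRM_natr; congr expR; field.
have h1 := expR_ge1Dx (- (z / 2)).
have h2 := expRxMexpNx_1 (z / 2).
have h3 := expR_gt0 (z / 2).
set e := expR (z / 2) in e2 h2 h3 *; set f := expR (- (z / 2)) in h1 h2 *.
have e_ge0 : 0 <= e * (1 - z / 2) by apply: mulr_ge0; [exact: ltW | lra].
have e_le1 : e * (1 - z / 2) <= 1.
  by rewrite -[X in _ <= X]h2; apply: ler_wpM2l; [exact: ltW | lra].
have poly : 1 <= (1 - z / 2) ^+ 2 * (1 + z + 2 * z ^+ 2).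
  rewrite -subr_ge0 (_ : _ - 1 = ((1 - z) * (5 / 4 - z / 2)) * z ^+ 2); last by field.
  by apply: mulr_ge0; [apply: mulr_ge0; lra | exact: sqr_ge0].
have sq : (e * (1 - z / 2)) ^+ 2 <= 1 by rewrite expr2; exact: mulr_ile1.
have pos : 0 < 1 - z / 2 by lra.
rewrite e2; nra.
Qed.

Section kernel_regret.
Context {R : realType} {X : finType} {n : nat}.
Local Notation A := 'I_n.+1.
Local Notation K := (n.+1%:R : R).
Variables (D : X -> R) (mu : X -> A -> R) (pimu : X -> A) (muh : X -> A -> R) (gam : R).
Hypotheses (gam0 : 0 < gam) (D0 : forall c, 0 <= D c) (D1 : \sum_c D c = 1).

(* Apply the estimation guarantee to the policy maximising the per-context
   "excess regret" [g c i]; averaging [g] over the kernel costs nothing more,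
   and the estimated gaps contribute at most [2 K / gam] by [pker_mul_gap_le]. *)
Lemma kernel_regret_le :
  (forall pi : X -> A, Reg D mu pimu pi <= 2 * Reghat D muh pi + 204 * K / gam) ->
  \sum_c D c * mu c (pimu c) - \sum_c \sum_i D c * mu c i * pker muh gam c i
    <= 206 * K / gam.
Proof.
move=> Hr.
pose b c := bgreedy muh c.
pose g c i := (mu c (pimu c) - mu c i) - 2 * (muh c (b c) - muh c i).
pose pig c := [arg max_(i > ord0) g c i]%O.
have g_le c i : g c i <= g c (pig c) by rewrite /pig; case: arg_maxP => //= j _; apply.
have sum_g : \sum_c D c * g c (pig c) <= 204 * K / gam.
  move: (Hr pig); rewrite /Reg /Reghat /Rval.
  suff -> : \sum_c D c * g c (pig c) =
      (\sum_c D c * mu c (pimu c) - \sum_c D c * mu c (pig c)) -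
      2 * (\sum_c D c * muh c (bgreedy muh c) - \sum_c D c * muh c (pig c)) by lra.
  by rewrite -!sumrB mulr_sumr -sumrB; apply: eq_bigr => c _; rewrite /g /b; ring.
have per_context c : D c * mu c (pimu c) - \sum_i D c * mu c i * pker muh gam c i
    <= D c * g c (pig c) + D c * (2 * K / gam).
  rewrite -mulrDr (eq_bigr (fun i => D c * (mu c i * pker muh gam c i))) => [|i _];
    last by rewrite mulrA.
  rewrite -mulr_sumr -mulrBr; apply: ler_wpM2l => //.
  have -> : mu c (pimu c) - \sum_i mu c i * pker muh gam c i =
      \sum_i pker muh gam c i * g c i +
      2 * \sum_i pker muh gam c i * (muh c (b c) - muh c i).
    rewrite mulr_sumr -big_split /= -[mu c (pimu c)]mul1r -{1}(pker_sum muh gam c) mulr_suml.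
    by rewrite -sumrB; apply: eq_bigr => i _; rewrite /g; ring.
  apply: lerD.
    apply: le_trans (_ : _ <= \sum_i pker muh gam c i * g c (pig c)) _.
      by apply: ler_sum => i _; apply: ler_wpM2l; [exact: pker_ge0 | exact: g_le].
    by rewrite -mulr_suml pker_sum // mul1r.
  rewrite -mulrA; apply: ler_wpM2l => //.
  apply: le_trans (_ : _ <= \sum_(i : A) gam^-1) _.
    by apply: ler_sum => i _; exact: pker_mul_gap_le.
  by rewrite sumr_const card_ord -[_ *+ n.+1]mulr_natl.
rewrite -sumrB; apply: le_trans (ler_sum _ (fun c _ => per_context c)) _.
rewrite big_split /= -mulr_suml D1 mul1r.
have -> : 206 * K / gam = 204 * K / gam + 2 * K / gam by rewrite -!mulrDl -natrD.
by rewrite lerD2r.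
Qed.

End kernel_regret.

Lemma leq_epoch m0 t : (1 <= m0)%N -> (tau (m0 - 1) < t)%N -> (m0 <= epoch t)%N.
Proof.
move=> m0_gt0 ht; rewrite leqNgt; apply/negP => hm.
have : (t <= 2 ^ (m0 - 1))%N.
  apply: leq_trans (up_logP t (isT : 1 < 2)%N) _; rewrite leq_exp2l //.
  by rewrite -ltnS subn1 prednK.
by rewrite leqNgt ht.
Qed.

Lemma tau_epoch_lt t : (1 < t)%N -> (tau (epoch t - 1) < t)%N.
Proof. by move=> t_gt1; rewrite /tau /epoch subn1; exact: up_log_gtn. Qed.

Section regret_bound.
Variables (R : realType) (X : finType) (n : nat)
  (D : X -> R) (mu : X -> 'I_n.+1 -> R) (pimu : X -> 'I_n.+1)
  (d : measure_display) (Omega : measurableType d) (P : probability Omega R)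
  (x : nat -> Omega -> X) (y : nat -> Omega -> 'I_n.+1 -> R)
  (a : nat -> Omega -> 'I_n.+1)
  (muhat : nat -> Omega -> X -> 'I_n.+1 -> R) (gamma : nat -> Omega -> R)
  (m0 T : nat) (delta : R).
Hypotheses (HD0 : forall c, 0 <= D c) (HD1 : \sum_(c : X) D c = 1)
  (Hm0 : (1 <= m0)%N) (HT : (tau (m0 - 1) < T)%N)
  (Hdelta : 0 < delta < 1)
  (Hxm : forall t c, measurable [set w | x t w = c])
  (Ham : forall t i, measurable [set w | a t w = i])
  (Hym : forall t i, measurable_fun setT (fun w => y t w i))
  (Hy01 : forall t w i, 0 <= y t w i <= 1)
  (Hxind : forall t, (1 <= t)%N -> forall S c, hist x y a t.-1 S ->
     (P (S `&` [set w | x t w = c]) = (D c)%:E * P S)%E)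
  (Hycond : forall t, (1 <= t)%N -> forall S c i, hist x y a t.-1 S ->
     (\int[P]_(w in S `&` [set w | x t w = c]) (y t w i)%:E =
      (mu c i)%:E * P (S `&` [set w | x t w = c]))%E)
  (Hmuhm : forall m, (m0 <= m)%N -> forall c i (B : set R), measurable B ->
     hist x y a (tau (m - 1)) [set w | B (muhat m w c i)])
  (Hgamm : forall m, (m0 <= m)%N -> forall (B : set R), measurable B ->
     hist x y a (tau (m - 1)) [set w | B (gamma m w)])
  (Hgam0 : forall m w, (m0 <= m)%N -> 0 < gamma m w)
  (Hact : forall t, (tau (m0 - 1) < t)%N ->
     forall S c (B : 'I_n.+1 -> set R) i,
     hist x y a t.-1 S -> (forall j, measurable (B j)) ->
     let E := S `&` [set w | x t w = c] `&` [set w | forall j, B j (y t w j)] in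
     P (E `&` [set w | a t w = i]) =
     (\int[P]_(w in E) (pker (muhat (epoch t) w) (gamma (epoch t) w) c i)%:E)%E).

Local Notation A := 'I_n.+1.
Local Notation K := (n.+1%:R : R).
Local Notation E := (expectR P).
Local Notation H := (hist x y a).
Local Notation t0 := (tau (m0 - 1)).
Local Notation GT k := (g_sigma_algebraType (hist_gen x y a k)).

Definition hist_measurable k (f : Omega -> R) :=
  measurable_fun (T := GT k) setT f.

Lemma hist_sub_measurable k : H k `<=` measurable.
Proof.
apply: smallest_sub; first exact: sigma_algebra_measurable.
move=> S [s [_ [[c ->]|[[i ->]|[i [B [mB ->]]]]]]]; [exact: Hxm | exact: Ham |].
by rewrite -[X in measurable X]setTI; exact: Hym.
Qed.

Lemma hist_le k k' : (k <= k')%N -> H k `<=` H k'.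
Proof.
move=> kk'; apply: sub_sigma_algebra2 => S [s [/andP[s1 sk] hS]].
by exists s; split => //; rewrite s1 (leq_trans sk kk').
Qed.

Lemma hist_measurable_preimage k f B :
  hist_measurable k f -> measurable B -> H k (f @^-1` B).
Proof. by move=> mf mB; rewrite -[_ @^-1` _]setTI; exact: mf. Qed.

Lemma hist_measurable_fun k f : hist_measurable k f -> measurable_fun setT f.
Proof.
by move=> mf _ B mB; rewrite setTI; exact: hist_sub_measurable (hist_measurable_preimage mf mB).
Qed.

Lemma hist_measurable_le k k' f : (k <= k')%N -> hist_measurable k f -> hist_measurable k' f.
Proof.
by move=> kk' mf _ B mB; rewrite setTI; apply: (hist_le kk'); exact: hist_measurable_preimage mf mB.
Qed.

Lemma hist_x k s c : (1 <= s <= k)%N -> H k [set w | x s w = c].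
Proof. by move=> hs; apply: sub_sigma_algebra; exists s; split => //; left; exists c. Qed.

Lemma hist_a k s i : (1 <= s <= k)%N -> H k [set w | a s w = i].
Proof.
by move=> hs; apply: sub_sigma_algebra; exists s; split => //; right; left; exists i.
Qed.

Lemma hist_measurable_y k s i : (1 <= s <= k)%N -> hist_measurable k (fun w => y s w i).
Proof.
move=> hs _ B mB; rewrite setTI; apply: sub_sigma_algebra.
by exists s; split => //; right; right; exists i, B.
Qed.

Lemma hist_measurable_muhat m k c i : (m0 <= m)%N -> (tau (m - 1) <= k)%N ->
  hist_measurable k (fun w => muhat m w c i).
Proof. by move=> hm hk _ B mB; rewrite setTI; apply: (hist_le hk); exact: Hmuhm. Qed.

Lemma hist_measurable_gamma m k : (m0 <= m)%N -> (tau (m - 1) <= k)%N ->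
  hist_measurable k (gamma m).
Proof. by move=> hm hk _ B mB; rewrite setTI; apply: (hist_le hk); exact: Hgamm. Qed.

Lemma bounded_rv_y t i : bounded_rv (fun w => y t w i).
Proof.
split; first exact: Hym.
by exists 1 => w; have /andP[y0 y1] := Hy01 t w i; rewrite ger0_norm.
Qed.

Local Hint Resolve bounded_rv_cst bounded_rv_y bounded_rv_indic Hxm Ham : bounded_rv.

Ltac bounded := repeat match goal with
 | |- forall _, _ => move=> ?
 | |- bounded_rv (fun _ => _ * _) => apply: bounded_rvM
 | |- bounded_rv (fun _ => _ - _) => apply: bounded_rvB
 | |- bounded_rv (fun _ => _ + _) => apply: bounded_rvD
 | |- bounded_rv (fun _ => expR _) => apply: bounded_rv_expR
 | |- bounded_rv (fun _ => _ ^+ 2) => apply: bounded_rvX2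
 | |- bounded_rv (fun _ => \sum_(_ <- _ | _) _) => apply: bounded_rv_sum
 | _ => solve [eauto with bounded_rv]
 end.

Lemma expectR_context t c G : (1 <= t)%N -> hist_measurable t.-1 G -> bounded_rv G ->
  E (fun w => G w * \1_[set w | x t w = c] w) = D c * E G.
Proof.
move=> ht hG bG.
have on_level_sets B : measurable B ->
    E (fun w => \1_(G @^-1` B) w * \1_[set w | x t w = c] w) =
    E (fun w => \1_(G @^-1` B) w * D c).
  move=> mB; have hS := hist_measurable_preimage hG mB; have mS := hist_sub_measurable hS.
  have mSx : measurable (G @^-1` B `&` [set w | x t w = c]) by exact: measurableI.
  rewrite (eq_expectR P (g := \1_(G @^-1` B `&` [set w | x t w = c]))) => [|w];
    last by rewrite indicI.
  rewrite (eq_expectR P (f := fun w => _ * D c) (g := fun w => D c * \1_(G @^-1` B) w))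
    => [|w]; last by rewrite mulrC.
  rewrite expectRZl; last exact: bounded_rv_indic.
  by rewrite !expectR_indic // Hxind ?fineM ?fin_num_measure.
rewrite (expectRM_eq_from_preimages bG (bounded_rv_indic (Hxm t c)) (bounded_rv_cst _)
  on_level_sets).
by rewrite -expectRZl //; apply: eq_expectR => w; rewrite mulrC.
Qed.

Lemma expectR_reward t c j G : (1 <= t)%N -> hist_measurable t.-1 G -> bounded_rv G ->
  E (fun w => G w * (\1_[set w | x t w = c] w * y t w j)) =
  mu c j * E (fun w => G w * \1_[set w | x t w = c] w).
Proof.
move=> ht hG bG.
have on_level_sets B : measurable B ->
    E (fun w => \1_(G @^-1` B) w * (\1_[set w | x t w = c] w * y t w j)) =
    E (fun w => \1_(G @^-1` B) w * (mu c j * \1_[set w | x t w = c] w)).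
  move=> mB; have hS := hist_measurable_preimage hG mB.
  have mSx : measurable (G @^-1` B `&` [set w | x t w = c]).
    exact: measurableI (hist_sub_measurable hS) (Hxm t c).
  rewrite (eq_expectR P (g := fun w => \1_(G @^-1` B `&` [set w | x t w = c]) w * y t w j))
    => [|w]; last by rewrite mulrA indicI.
  rewrite (eq_expectR P (f := fun w => _ * (mu c j * _))
    (g := fun w => mu c j * \1_(G @^-1` B `&` [set w | x t w = c]) w)) => [|w];
    last by rewrite mulrCA indicI.
  rewrite expectR_indicM // Hycond // expectRZl; last exact: bounded_rv_indic.
  by rewrite expectR_indic // fineM ?fin_num_measure.
rewrite (expectRM_eq_from_preimages bG _ _ on_level_sets); try by bounded.
by rewrite -expectRZl; [apply: eq_expectR => w; ring | bounded].
Qed.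

Lemma lt1_of_gt_t0 t : (t0 < t)%N -> (1 < t)%N.
Proof. by apply: leq_ltn_trans; rewrite /tau expn_gt0. Qed.

Lemma tau_epoch_le_pred t : (t0 < t)%N -> (tau (epoch t - 1) <= t.-1)%N.
Proof. by move=> ht; rewrite -ltnS prednK ?tau_epoch_lt ?lt1_of_gt_t0 // ltnW ?lt1_of_gt_t0. Qed.

Definition act_prob t c i w := pker (muhat (epoch t) w) (gamma (epoch t) w) c i.

Lemma gamma_epoch_gt0 t w : (t0 < t)%N -> 0 < gamma (epoch t) w.
Proof. by move=> ht; apply: Hgam0; exact: leq_epoch. Qed.

Lemma hist_measurable_act_prob t c i : (t0 < t)%N -> hist_measurable t.-1 (act_prob t c i).
Proof.
move=> ht; have hm := leq_epoch Hm0 ht; have hk := tau_epoch_le_pred ht.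
apply: measurable_pker; last exact: hist_measurable_gamma.
by move=> j; exact: hist_measurable_muhat.
Qed.

Lemma act_prob_ge0 t c i w : (t0 < t)%N -> 0 <= act_prob t c i w.
Proof. by move=> ht; exact/pker_ge0/gamma_epoch_gt0. Qed.

Lemma act_prob_le1 t c i w : (t0 < t)%N -> act_prob t c i w <= 1.
Proof. by move=> ht; exact/pker_le1/gamma_epoch_gt0. Qed.

Lemma bounded_rv_act_prob t c i : (t0 < t)%N -> bounded_rv (act_prob t c i).
Proof.
move=> ht; split; first exact: hist_measurable_fun (hist_measurable_act_prob c i ht).
by exists 1 => w; rewrite ger0_norm ?act_prob_ge0 ?act_prob_le1.
Qed.

Local Hint Resolve bounded_rv_act_prob : bounded_rv.

Lemma expectR_action_event t c i (S : set Omega) : (t0 < t)%N -> H t.-1 S ->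
  E (fun w => y t w i * (\1_S w * \1_[set w | x t w = c] w * \1_[set w | a t w = i] w)) =
  E (fun w => y t w i * (\1_S w * \1_[set w | x t w = c] w * act_prob t c i w)).
Proof.
move=> ht hS; have mS := hist_sub_measurable hS.
apply: expectRM_eq_from_preimages; try by bounded.
move=> B mB.
pose Bi (j : A) := if j == i then B else setT.
have mBi j : measurable (Bi j) by rewrite /Bi; case: (j == i).
have eB : [set w | forall j, Bi j (y t w j)] = (fun w => y t w i) @^-1` B.
  apply/seteqP; split => w /= => [/(_ i) | Bw j]; rewrite /Bi ?eqxx //.
  by case: eqP => // ->.
have := Hact ht c i hS mBi; rewrite /= eB.
set F := S `&` [set w | x t w = c] `&` _ => hF.
have mF : measurable F.
  by apply: measurableI; [exact: measurableI | rewrite -[X in measurable X]setTI; exact: Hym].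
rewrite (eq_expectR P (g := \1_(F `&` [set w | a t w = i]))) => [|w]; last first.
  by rewrite /F !indicI /=; ring.
rewrite [RHS](eq_expectR P (g := fun w => \1_F w * act_prob t c i w)) => [|w]; last first.
  by rewrite /F !indicI /=; ring.
by rewrite expectR_indic ?hF ?expectR_indicM //; exact: measurableI.
Qed.

Lemma expectR_action t c i G : (t0 < t)%N -> hist_measurable t.-1 G -> bounded_rv G ->
  E (fun w => G w * (y t w i * (\1_[set w | x t w = c] w * \1_[set w | a t w = i] w))) =
  E (fun w => G w * (y t w i * (\1_[set w | x t w = c] w * act_prob t c i w))).
Proof.
move=> ht hG bG; apply: expectRM_eq_from_preimages; try by bounded.
move=> B mB.
have := expectR_action_event c i ht (hist_measurable_preimage hG mB).
rewrite (eq_expectR P (f := fun w => \1_(G @^-1` B) w * _)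
  (g := fun w => y t w i * (\1_(G @^-1` B) w * \1_[set w | x t w = c] w *
   \1_[set w | a t w = i] w))) => [->|w]; last by ring.
by apply: eq_expectR => w; ring.
Qed.

Definition mean_opt_reward := \sum_c D c * mu c (pimu c).
Definition mean_played_reward t w := \sum_c \sum_i D c * mu c i * act_prob t c i w.

Lemma played_reward_split t w : y t w (a t w) =
  \sum_c \sum_i \1_[set w | x t w = c] w * \1_[set w | a t w = i] w * y t w i.
Proof.
rewrite (case_indic_sum (a t) (fun i w => y t w i)).
rewrite (case_indic_sum (x t) (fun _ w => \sum_i \1_[set w | a t w = i] w * y t w i)).
by apply: eq_bigr => c _; rewrite mulr_sumr; apply: eq_bigr => i _; rewrite mulrA.
Qed.

Lemma expectR_y_opt t G : (1 <= t)%N -> hist_measurable t.-1 G -> bounded_rv G ->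
  E (fun w => G w * y t w (pimu (x t w))) = mean_opt_reward * E G.
Proof.
move=> ht hG bG.
rewrite (eq_expectR P (g := fun w => \sum_c G w * (\1_[set w | x t w = c] w * y t w (pimu c))))
  => [|w]; last by rewrite (case_indic_sum (x t) (fun c w => y t w (pimu c))) mulr_sumr.
rewrite expectR_sum; last by bounded.
rewrite /mean_opt_reward mulr_suml; apply: eq_bigr => c _.
by rewrite expectR_reward // expectR_context //; ring.
Qed.

Lemma expectR_y_played t G : (t0 < t)%N -> hist_measurable t.-1 G -> bounded_rv G ->
  E (fun w => G w * y t w (a t w)) = E (fun w => G w * mean_played_reward t w).
Proof.
move=> ht hG bG; have t_ge1 : (1 <= t)%N by exact/ltnW/lt1_of_gt_t0.
rewrite (eq_expectR P (g := fun w => \sum_c \sum_i G w * (y t w i *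
   (\1_[set w | x t w = c] w * \1_[set w | a t w = i] w)))) => [|w]; last first.
  rewrite played_reward_split mulr_sumr; apply: eq_bigr => c _; rewrite mulr_sumr.
  by apply: eq_bigr => i _; ring.
rewrite [RHS](eq_expectR P (g := fun w => \sum_c \sum_i
   (D c * mu c i) * (G w * act_prob t c i w))) => [|w]; last first.
  rewrite /mean_played_reward mulr_sumr; apply: eq_bigr => c _; rewrite mulr_sumr.
  by apply: eq_bigr => i _; ring.
have hGp c i : hist_measurable t.-1 (fun w => G w * act_prob t c i w).
  by apply: measurable_funM => //; exact: hist_measurable_act_prob.
rewrite !expectR_sum; try by bounded.
apply: eq_bigr => c _; rewrite !expectR_sum; try by bounded.
apply: eq_bigr => i _; rewrite expectR_action // (eq_expectR P (g := fun w =>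
  (G w * act_prob t c i w) * (\1_[set w | x t w = c] w * y t w i))) => [|w]; last by ring.
rewrite expectR_reward ?expectR_context ?expectRZl //; try by bounded.
ring.
Qed.

(* [mu] is only pinned down on the support of [D]; this is the form of [0 <= mu <= 1]
   that the hypotheses yield. *)
Lemma D_mu_bounds c i : 0 <= D c * mu c i <= D c.
Proof.
have hist1 : hist_measurable 0 (fun=> 1) by exact: measurable_cst.
have hx := expectR_context c (isT : 1 <= 1)%N hist1 (bounded_rv_cst 1).
have hy := expectR_reward c i (isT : 1 <= 1)%N hist1 (bounded_rv_cst 1).
rewrite expectR_cst mulr1 in hx; rewrite hx mulrC in hy; rewrite -hy -hx.
apply/andP; split.
- rewrite -(expectR_cst P 0); apply: ler_expectR; try by bounded.
  move=> w; have /andP[y0 _] := Hy01 1 w i.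
  by rewrite mul1r mulr_ge0 // indicE ler0n.
- apply: ler_expectR; try by bounded.
  move=> w; have /andP[_ y1] := Hy01 1 w i.
  by rewrite !mul1r ler_piMr // indicE ler0n.
Qed.

Lemma mean_opt_reward_itv : 0 <= mean_opt_reward <= 1.
Proof.
rewrite /mean_opt_reward -HD1 sumr_ge0 /= => [|c _]; last by case/andP: (D_mu_bounds c (pimu c)).
by apply: ler_sum => c _; case/andP: (D_mu_bounds c (pimu c)).
Qed.

Lemma mean_played_reward_itv t w : (t0 < t)%N -> 0 <= mean_played_reward t w <= 1.
Proof.
move=> ht; rewrite /mean_played_reward -HD1; apply/andP; split.
  apply: sumr_ge0 => c _; apply: sumr_ge0 => i _.
  by rewrite mulr_ge0 ?act_prob_ge0 //; case/andP: (D_mu_bounds c i).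
apply: ler_sum => c _; apply: le_trans (_ : _ <= \sum_i D c * act_prob t c i w) _.
  apply: ler_sum => i _; rewrite ler_wpM2r ?act_prob_ge0 //.
  by case/andP: (D_mu_bounds c i).
by rewrite -mulr_sumr pker_sum mulr1.
Qed.

Definition mdiff t w :=
  (y t w (pimu (x t w)) - y t w (a t w)) - (mean_opt_reward - mean_played_reward t w).

Lemma mdiff_bound t w : (t0 < t)%N -> `|mdiff t w| <= 2.
Proof.
move=> ht; have /andP[? ?] := Hy01 t w (pimu (x t w)); have /andP[? ?] := Hy01 t w (a t w).
have /andP[? ?] := mean_opt_reward_itv; have /andP[? ?] := mean_played_reward_itv w ht.
by rewrite /mdiff ler_norml; apply/andP; split; lra.
Qed.

Lemma hist_measurable_mdiff t : (t0 < t)%N -> hist_measurable t (mdiff t).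
Proof.
move=> ht; have ht1 : (1 <= t <= t)%N by rewrite leqnn andbT ltnW ?lt1_of_gt_t0.
apply: measurable_funB; first apply: measurable_funB.
- apply: (measurable_fun_case (T := GT t) (F := fun c w => y t w (pimu c))) => c.
    exact: hist_x.
  exact: hist_measurable_y.
- apply: (measurable_fun_case (T := GT t) (F := fun i w => y t w i)) => i.
    exact: hist_a.
  exact: hist_measurable_y.
apply: measurable_funB; first exact: measurable_cst.
apply: hist_measurable_le (leq_pred t) _.
apply: measurable_sum => c; apply: measurable_sum => i.
by apply: measurable_funM; [exact: measurable_cst | exact: hist_measurable_act_prob].
Qed.

Lemma bounded_rv_mdiff t : (t0 < t)%N -> bounded_rv (mdiff t).
Proof.
move=> ht; split; first exact: hist_measurable_fun (hist_measurable_mdiff ht).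
by exists 2 => w; exact: mdiff_bound.
Qed.

Lemma bounded_rv_y_opt t : bounded_rv (fun w => y t w (pimu (x t w))).
Proof.
split; first exact: (measurable_fun_case (F := fun c w => y t w (pimu c)) (Hxm t)).
by exists 1 => w; have /andP[? ?] := Hy01 t w (pimu (x t w)); rewrite ger0_norm.
Qed.

Lemma bounded_rv_y_played t : bounded_rv (fun w => y t w (a t w)).
Proof.
split; first exact: (measurable_fun_case (F := fun i w => y t w i) (Ham t)).
by exists 1 => w; have /andP[? ?] := Hy01 t w (a t w); rewrite ger0_norm.
Qed.

Lemma bounded_rv_mean_played_reward t : (t0 < t)%N -> bounded_rv (mean_played_reward t).
Proof. by move=> ht; apply: bounded_rv_sum => c; apply: bounded_rv_sum => i; bounded. Qed.

Local Hint Resolve bounded_rv_mdiff bounded_rv_y_opt bounded_rv_y_played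
  bounded_rv_mean_played_reward : bounded_rv.

Lemma expectR_mdiff t G : (t0 < t)%N -> hist_measurable t.-1 G -> bounded_rv G ->
  E (fun w => G w * mdiff t w) = 0.
Proof.
move=> ht hG bG; have t_ge1 : (1 <= t)%N by exact/ltnW/lt1_of_gt_t0.
rewrite (eq_expectR P (g := fun w => (G w * y t w (pimu (x t w)) - G w * y t w (a t w))
   - (mean_opt_reward * G w - G w * mean_played_reward t w))) => [|w]; last by rewrite /mdiff; ring.
rewrite !expectRB; try by bounded.
by rewrite expectRZl // expectR_y_opt // expectR_y_played //; ring.
Qed.

Lemma expectR_mdiff_sqr_le t G : (t0 < t)%N -> hist_measurable t.-1 G -> bounded_rv G ->
  (forall w, 0 <= G w) -> E (fun w => G w * mdiff t w ^+ 2) <= E G.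
Proof.
move=> ht hG bG G0; have t_ge1 : (1 <= t)%N by exact/ltnW/lt1_of_gt_t0.
pose Gm w := G w * (mean_opt_reward - mean_played_reward t w).
have hGm : hist_measurable t.-1 Gm.
  apply: measurable_funM => //; apply: measurable_funB; first exact: measurable_cst.
  apply: measurable_sum => c; apply: measurable_sum => i.
  by apply: measurable_funM; [exact: measurable_cst | exact: hist_measurable_act_prob].
have bGm : bounded_rv Gm by rewrite /Gm; bounded.
(* Expanding the square, the cross terms are computed by the conditional means. *)
rewrite (eq_expectR P (g := fun w =>
   ((G w * (y t w (pimu (x t w)) - y t w (a t w)) ^+ 2
    - 2 * (Gm w * y t w (pimu (x t w))))
    + 2 * (Gm w * y t w (a t w)))
    + (mean_opt_reward * Gm w - Gm w * mean_played_reward t w))) => [|w]; last first.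
  by rewrite /mdiff /Gm; ring.
rewrite expectRD; try by bounded.
rewrite expectRD; try by bounded.
rewrite expectRB; try by bounded.
rewrite expectRB; try by bounded.
rewrite !expectRZl; try by bounded.
rewrite expectR_y_opt // expectR_y_played //.
have -> : E (fun w => Gm w * mean_played_reward t w) =
    mean_opt_reward * E Gm - E (fun w => Gm w * (mean_opt_reward - mean_played_reward t w)).
  rewrite (eq_expectR P (f := fun w => Gm w * (mean_opt_reward - mean_played_reward t w))
    (g := fun w => mean_opt_reward * Gm w - Gm w * mean_played_reward t w)) => [|w]; last by ring.
  by rewrite expectRB ?expectRZl //; try by bounded; ring.
have sq_le : E (fun w => G w * (y t w (pimu (x t w)) - y t w (a t w)) ^+ 2) <= E G.
  apply: ler_expectR; try by bounded.
  move=> w; rewrite ler_piMr //.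
  have /andP[? ?] := Hy01 t w (pimu (x t w)); have /andP[? ?] := Hy01 t w (a t w).
  nra.
have Gm_ge0 : 0 <= E (fun w => Gm w * (mean_opt_reward - mean_played_reward t w)).
  rewrite -(expectR_cst P 0); apply: ler_expectR; try by bounded.
  by move=> w; rewrite /Gm -mulrA mulr_ge0 // -expr2 sqr_ge0.
lra.
Qed.

Lemma expectR_expR_mdiff_le t G lam : (t0 < t)%N -> hist_measurable t.-1 G -> bounded_rv G ->
  (forall w, 0 <= G w) -> 0 <= lam <= 1 / 2 ->
  E (fun w => G w * expR (lam * mdiff t w)) <= (1 + 2 * lam ^+ 2) * E G.
Proof.
move=> ht hG bG G0 /andP[lam0 lam1].
apply: le_trans (_ : _ <= E (fun w =>
  G w + lam * (G w * mdiff t w) + 2 * lam ^+ 2 * (G w * mdiff t w ^+ 2))) _.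
  apply: ler_expectR; try by bounded.
  move=> w; have : -1 <= lam * mdiff t w <= 1.
    rewrite -ler_norml normrM ger0_norm //.
    by apply: le_trans (ler_pM lam0 (normr_ge0 _) lam1 (mdiff_bound w ht)) _; lra.
  move/expR_le_quadratic/(ler_wpM2l (G0 w)); rewrite -[leRHS]/(_ * _).
  by move/le_trans; apply; rewrite le_eqVlt; apply/orP; left; apply/eqP; ring.
rewrite !expectRD; try by bounded.
rewrite !expectRZl ?expectR_mdiff // ?mulr0 ?addr0; try by bounded.
have := ler_wpM2l (_ : 0 <= 2 * lam ^+ 2) (expectR_mdiff_sqr_le ht hG bG G0).
by rewrite mulr_ge0 ?sqr_ge0 //; lra.
Qed.

Definition noise_sum j w := \sum_(t0.+1 <= t < (t0 + j).+1) mdiff t w.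

Lemma noise_sum0 w : noise_sum 0 w = 0.
Proof. by rewrite /noise_sum addn0 big_geq. Qed.

Lemma noise_sumS j w : noise_sum j.+1 w = noise_sum j w + mdiff (t0 + j).+1 w.
Proof. by rewrite /noise_sum addnS big_nat_recr //= ltnS leq_addr. Qed.

Lemma hist_measurable_noise_sum j : hist_measurable (t0 + j) (noise_sum j).
Proof.
elim: j => [|j IH].
  rewrite (_ : noise_sum 0 = fun=> 0); first exact: measurable_cst.
  by apply/funext => w; exact: noise_sum0.
rewrite (_ : noise_sum j.+1 = fun w => noise_sum j w + mdiff (t0 + j).+1 w); last first.
  by apply/funext => w; rewrite noise_sumS.
apply: measurable_funD; first by apply: hist_measurable_le IH; rewrite leq_add2l.
by rewrite addnS; apply: hist_measurable_mdiff; rewrite ltnS leq_addr.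
Qed.

Lemma noise_sum_bound j w : `|noise_sum j w| <= 2 * j%:R.
Proof.
elim: j => [|j IH]; first by rewrite noise_sum0 normr0 mulr0.
rewrite noise_sumS (_ : 2 * j.+1%:R = 2 * j%:R + 2 :> R); last by rewrite -addn1 natrD; ring.
apply: le_trans (ler_normD _ _) _.
by apply: lerD => //; apply: mdiff_bound; rewrite ltnS leq_addr.
Qed.

Lemma bounded_rv_noise_sum j : bounded_rv (noise_sum j).
Proof.
split; first by apply: (@hist_measurable_fun (t0 + j)); exact: hist_measurable_noise_sum.
by exists (2 * j%:R); exact: noise_sum_bound.
Qed.

Local Hint Resolve bounded_rv_noise_sum : bounded_rv.

Lemma expectR_expR_noise_sum_le j lam : 0 <= lam <= 1 / 2 ->
  E (fun w => expR (lam * noise_sum j w)) <= (1 + 2 * lam ^+ 2) ^+ j.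
Proof.
move=> hlam; elim: j => [|j IH].
  by rewrite (eq_expectR P (g := fun=> 1)) ?expectR_cst // => w; rewrite noise_sum0 mulr0 expR0.
have ht : (t0 < (t0 + j).+1)%N by rewrite ltnS leq_addr.
have hG : hist_measurable (t0 + j).+1.-1 (fun w => expR (lam * noise_sum j w)).
  apply: (measurableT_comp (@measurable_expR R)).
  by apply: measurable_funM; [exact: measurable_cst | exact: hist_measurable_noise_sum].
rewrite (eq_expectR P (g := fun w => expR (lam * noise_sum j w) *
  expR (lam * mdiff (t0 + j).+1 w))) => [|w]; last by rewrite noise_sumS mulrDr expRD.
apply: le_trans (expectR_expR_mdiff_le ht hG _ (fun w => expR_ge0 _) hlam) _; first by bounded.
by rewrite [leRHS]exprS; apply: ler_wpM2l => //; rewrite addr_ge0 // mulr_ge0 // sqr_ge0.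
Qed.

Local Notation N := (T - t0)%N.

Lemma noise_sum_tail_le eps lam : 0 <= lam <= 1 / 2 ->
  E (\1_[set w | eps <= noise_sum N w]) <= expR (- (lam * eps)) * (1 + 2 * lam ^+ 2) ^+ N.
Proof.
move=> /[dup] hlam /andP[lam0 _].
have mA : measurable [set w | eps <= noise_sum N w].
  by apply: measurable_ler_set; [exact: measurable_cst | case: (bounded_rv_noise_sum N)].
apply: le_trans (_ : _ <= E (fun w => expR (- (lam * eps)) * expR (lam * noise_sum N w))) _.
  apply: ler_expectR; try by bounded.
  move=> w; rewrite indicE -expRD; case: (boolP (w \in _)) => [/set_mem /= hw | _].
    by rewrite -[leLHS]addr0 (le_trans _ (expR_ge1Dx _)) // lerD2l addrC -mulrBr
      mulr_ge0 // subr_ge0.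
  exact: expR_ge0.
rewrite expectRZl; last by bounded.
by rewrite ler_wpM2l ?expR_ge0 // expectR_expR_noise_sum_le.
Qed.

Definition azuma_radius := Num.sqrt (8 * N%:R * ln (2 / delta)).

(* Chernoff with [lam = eps / (4 N)], which is admissible as long as [eps <= 2 N];
   beyond that the event is empty since [|noise_sum N| <= 2 N]. *)
Lemma azuma_noise_sum : E (\1_[set w | azuma_radius <= noise_sum N w]) <= delta / 2.
Proof.
have N_gt0 : 0 < N%:R :> R by rewrite ltr0n subn_gt0.
have /andP[d0 d1] := Hdelta.
have L_gt0 : 0 < ln (2 / delta) by apply: ln_gt0; rewrite ltr_pdivlMr //; lra.
set L := ln (2 / delta) in L_gt0 *; set eps := azuma_radius.
have eps_ge0 : 0 <= eps by exact: sqrtr_ge0.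
have eps2 : eps ^+ 2 = 8 * N%:R * L by rewrite sqr_sqrtr // !mulr_ge0 // ltW.
have [eps_le | eps_gt] := leP eps (2 * N%:R); last first.
  rewrite (eq_expectR P (g := fun=> 0)) ?expectR_cst ?divr_ge0 ?(ltW d0) // => w.
  rewrite indicE memNset //= => hw.
  by have := noise_sum_bound N w; rewrite ler_norml => /andP[_]; lra.
pose lam := eps / (4 * N%:R).
have hlam : 0 <= lam <= 1 / 2.
  by rewrite divr_ge0 ?mulr_ge0 //= ler_pdivrMr ?mulr_gt0 // mul1r; lra.
apply: le_trans (noise_sum_tail_le eps hlam) _.
apply: le_trans (_ : _ <= expR (- (lam * eps)) * expR (2 * lam ^+ 2 * N%:R)) _.
  rewrite ler_wpM2l ?expR_ge0 // expRM_natr lerXn2r ?nnegrE ?expR_ge0 ?expR_ge1Dx //.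
  by rewrite addr_ge0 // mulr_ge0 // sqr_ge0.
have N8 : 8 * N%:R != 0 :> R by rewrite lt0r_neq0 ?mulr_gt0.
rewrite -expRD (_ : _ + _ = - (eps ^+ 2 / (8 * N%:R))); last first.
  by rewrite /lam; field; exact: lt0r_neq0.
rewrite eps2 (_ : 8 * N%:R * L / (8 * N%:R) = L); last by rewrite mulrAC mulfV // mul1r.
by rewrite expRN lnK ?posrE ?divr_gt0 // invf_div.
Qed.

Definition good_event := [set w | forall m, (m0 <= m)%N -> (tau (m - 1) < T)%N ->
  forall pi : X -> A, Reg D mu pimu pi <= 2 * Reghat D (muhat m w) pi + 204 * K / gamma m w].

Definition regret_event := [set w |
  \sum_(1 <= t < T.+1) (y t w (pimu (x t w)) - y t w (a t w)) <=
  t0%:R + 206 * K * \sum_(t0.+1 <= t < T.+1) (gamma (epoch t) w)^-1 + azuma_radius].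

Lemma measurable_muhat m c j : (m0 <= m)%N -> measurable_fun setT (fun w => muhat m w c j).
Proof. by move=> hm; exact: hist_measurable_fun (hist_measurable_muhat c j hm (leqnn _)). Qed.

Lemma measurable_gamma m : (m0 <= m)%N -> measurable_fun setT (gamma m).
Proof. by move=> hm; exact: hist_measurable_fun (hist_measurable_gamma hm (leqnn _)). Qed.

Lemma measurable_good_event : measurable good_event.
Proof.
pose relevant m := (m0 <= m)%N && (tau (m - 1) < T)%N.
pose good m (f : {ffun X -> A}) := [set w |
  Reg D mu pimu f <= 2 * Reghat D (muhat m w) f + 204 * K / gamma m w].
rewrite (_ : good_event = \bigcap_m
    (if relevant m then \bigcap_(f in [set: {ffun X -> A}]) good m f else setT)).
  apply: bigcapT_measurable => m; rewrite /relevant.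
  case: (boolP (m0 <= m)%N) => //= hm; case: ifP => // _.
  apply: fin_bigcap_measurable => [|f _]; first exact: finite_finset.
  apply: measurable_ler_set; first exact: measurable_cst.
  apply: measurable_funD; last first.
    by apply: measurable_funM; [exact: measurable_cst | exact/measurable_funV/measurable_gamma].
  apply: measurable_funM; first exact: measurable_cst.
  apply: measurable_funB; apply: measurable_sum => c.
    apply: measurable_funM; first exact: measurable_cst.
    by apply: measurable_greedy_value => j; exact: measurable_muhat.
  by apply: measurable_funM; [exact: measurable_cst | exact: measurable_muhat].
apply/seteqP; split => w /= => [hw m _ | hw m hm hT pi].
  rewrite /relevant; case: (boolP (m0 <= m)%N) => //= hm; case: ifP => // hT f _.
  exact: hw.
have := hw m I; rewrite /relevant hm hT /= => /(_ [ffun c => pi c] I) good_pi.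
have -> : pi = (fun c => [ffun c => pi c] c) by apply: funext => c; rewrite ffunE.
exact: good_pi.
Qed.

Lemma measurable_regret_event : measurable regret_event.
Proof.
apply: measurable_ler_set.
  apply: measurable_sum => t; apply: measurable_funB; first by case: (bounded_rv_y_opt t).
  by case: (bounded_rv_y_played t).
apply: measurable_funD; last exact: measurable_cst.
apply: measurable_funD; first exact: measurable_cst.
apply: measurable_funM; first exact: measurable_cst.
apply: measurable_sum_in => t; rewrite mem_index_iota => /andP[ht _].
by apply/measurable_funV/measurable_gamma/leq_epoch.
Qed.

Lemma mean_reward_gap_le t w : (t0 < t)%N -> (t <= T)%N -> good_event w ->
  mean_opt_reward - mean_played_reward t w <= 206 * K / gamma (epoch t) w.
Proof.
move=> ht htT hw; apply: kernel_regret_le => //; first exact: gamma_epoch_gt0.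
apply: hw; first exact: leq_epoch.
by apply: leq_trans htT; exact/tau_epoch_lt/lt1_of_gt_t0.
Qed.

Lemma good_event_regret w : good_event w -> noise_sum N w < azuma_radius -> regret_event w.
Proof.
move=> hw hN; rewrite /regret_event /= (big_cat_nat _ (n := t0.+1)) //=; last first.
  by rewrite ltnS ltnW.
have warmup : \sum_(1 <= t < t0.+1) (y t w (pimu (x t w)) - y t w (a t w)) <= t0%:R.
  apply: le_trans (_ : _ <= \sum_(1 <= t < t0.+1) (1 : R)) _; last first.
    by rewrite sumr_const_nat subn1.
  apply: ler_sum_nat => t _.
  by have /andP[? ?] := Hy01 t w (pimu (x t w)); have /andP[? ?] := Hy01 t w (a t w); lra.
have split_noise : \sum_(t0.+1 <= t < T.+1) (y t w (pimu (x t w)) - y t w (a t w)) =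
    noise_sum N w + \sum_(t0.+1 <= t < T.+1) (mean_opt_reward - mean_played_reward t w).
  rewrite /noise_sum subnKC ?(ltnW HT) // -big_split /=.
  by apply: eq_bigr => t _; rewrite /mdiff; ring.
have gaps : \sum_(t0.+1 <= t < T.+1) (mean_opt_reward - mean_played_reward t w) <=
    206 * K * \sum_(t0.+1 <= t < T.+1) (gamma (epoch t) w)^-1.
  rewrite mulr_sumr; apply: ler_sum_nat => t /andP[ht htT].
  by apply: mean_reward_gap_le => //; rewrite -ltnS.
rewrite split_noise; lra.
Qed.

Lemma regret_event_prob :
  ((1 - delta / 2)%:E <= P good_event)%E -> ((1 - delta)%:E <= P regret_event)%E.
Proof.
move=> Pgood; have mG := measurable_good_event; have mC := measurable_regret_event.
have mA : measurable [set w | azuma_radius <= noise_sum N w].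
  by apply: measurable_ler_set; [exact: measurable_cst | case: (bounded_rv_noise_sum N)].
rewrite -(fineK (fin_num_measure P _ mC)) lee_fin -expectR_indic //.
have : 1 - delta / 2 <= E (\1_good_event).
  by rewrite expectR_indic // -lee_fin fineK // fin_num_measure.
have := azuma_noise_sum.
suff : E (\1_good_event) - E (\1_[set w | azuma_radius <= noise_sum N w]) <= E (\1_regret_event).
  by lra.
rewrite -expectRB; try by bounded.
apply: ler_expectR; try by bounded.
move=> w; rewrite !indicE; case: (boolP (w \in good_event)) => [/set_mem wG | _];
  case: (boolP (w \in regret_event)) => wC; case: (boolP (w \in _)) => wA //=; try lra.
exfalso; move/negP: wC; apply; apply/mem_set/good_event_regret => //.
by rewrite ltNge; apply: contra wA => ?; exact/mem_set.
Qed.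

End regret_bound.

Unset Implicit Arguments.

Theorem mainTheorem7
  (R : realType) (X : finType) (n : nat)
  (D : X -> R) (mu : X -> 'I_n.+1 -> R) (pimu : X -> 'I_n.+1)
  (d : measure_display) (Omega : measurableType d) (P : probability Omega R)
  (x : nat -> Omega -> X) (y : nat -> Omega -> 'I_n.+1 -> R)
  (a : nat -> Omega -> 'I_n.+1)
  (muhat : nat -> Omega -> X -> 'I_n.+1 -> R) (gamma : nat -> Omega -> R)
  (m0 T : nat) (delta : R)
  (* context distribution *)
  (HD0 : forall c, 0 <= D c) (HD1 : \sum_(c : X) D c = 1)
  (* pi_mu is a greedy policy for mu *)
  (Hpimu : forall c i, mu c i <= mu c (pimu c))
  (* parameters *)
  (Hm0 : (1 <= m0)%N) (HT : (tau (m0 - 1) < T)%N)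
  (Hdelta : 0 < delta < 1)
  (* the observed quantities are random variables *)
  (Hxm : forall t c, measurable [set w | x t w = c])
  (Ham : forall t i, measurable [set w | a t w = i])
  (Hym : forall t i, measurable_fun setT (fun w => y t w i))
  (* rewards in [0,1]^K *)
  (Hy01 : forall t w i, 0 <= y t w i <= 1)
  (* x_t ~ D, independent of the past S_{t-1} *)
  (Hxind : forall t, (1 <= t)%N -> forall S c, hist x y a t.-1 S ->
     (P (S `&` [set w | x t w = c]) = (D c)%:E * P S)%E)
  (* E[y_t(i) | x_t, S_{t-1}] = mu(x_t, i) *)
  (Hycond : forall t, (1 <= t)%N -> forall S c i, hist x y a t.-1 S ->
     (\int[P]_(w in S `&` [set w | x t w = c]) (y t w i)%:E =
      (mu c i)%:E * P (S `&` [set w | x t w = c]))%E)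
  (* (muhat_m, gamma_m) is S_{tau_{m-1}}-measurable, gamma_m > 0 *)
  (Hmuhm : forall m, (m0 <= m)%N -> forall c i (B : set R), measurable B ->
     hist x y a (tau (m - 1)) [set w | B (muhat m w c i)])
  (Hgamm : forall m, (m0 <= m)%N -> forall (B : set R), measurable B ->
     hist x y a (tau (m - 1)) [set w | B (gamma m w)])
  (Hgam0 : forall m w, (m0 <= m)%N -> 0 < gamma m w)
  (* for t > tau_{m0-1}: a_t ~ p_{m(t)}(. | x_t), independently of y_t
     given (x_t, S_{t-1}) *)
  (Hact : forall t, (tau (m0 - 1) < t)%N ->
     forall S c (B : 'I_n.+1 -> set R) i,
     hist x y a t.-1 S -> (forall j, measurable (B j)) ->
     let E := S `&` [set w | x t w = c] `&` [set w | forall j, B j (y t w j)] in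
     P (E `&` [set w | a t w = i]) =
     (\int[P]_(w in E) (pker (muhat (epoch t) w) (gamma (epoch t) w) c i)%:E)%E)
  (* the high-probability regret-estimation event *)
  (Hreg : ((1 - delta / 2)%:E <=
     P [set w | forall m, (m0 <= m)%N -> (tau (m - 1) < T)%N ->
        forall pi : X -> 'I_n.+1,
        (Reg D mu pimu pi <=
         2 * Reghat D (muhat m w) pi + 204 * n.+1%:R / gamma m w)%R])%E) :
  ((1 - delta)%:E <=
   P [set w |
      (\sum_(1 <= t < T.+1) (y t w (pimu (x t w)) - y t w (a t w)) <=
      (tau (m0 - 1))%:R
      + 206 * n.+1%:R * \sum_((tau (m0 - 1)).+1 <= t < T.+1) (gamma (epoch t) w)^-1
      + Num.sqrt (8 * (T - tau (m0 - 1))%:R * ln (2 / delta)))%R])%E.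
Proof.
exact: (regret_event_prob HD0 HD1 Hm0 HT Hdelta Hxm Ham Hym Hy01 Hxind Hycond Hmuhm Hgamm
  Hgam0 Hact Hreg).
Qed.
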